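(* Let $A,B$ be commutative rings with identity, $f:A\to B$ a ring homomorphism and $J$ an ideal of $B$, regarded as an $A$-module via $f$. Then: (1) for every finitely generated ideal $\mathfrak b$ of $A$, $$\operatorname{Kgrade}_{A\bowtie^f J}(\mathfrak b^e,A\bowtie^f J)=\min\{\operatorname{Kgrade}_A(\mathfrak b,A),\operatorname{Kgrade}_A(\mathfrak b,J)\};$$ (2) for every ideal $\mathfrak a$ of $A$, $$\operatorname{Kgrade}_{A\bowtie^f J}(\mathfrak a^e,A\bowtie^f J)\le\min\{\operatorname{Kgrade}_A(\mathfrak a,A),\operatorname{Kgrade}_A(\mathfrak a,J)\}.$$
   Context: The amalgamation of $A$ with $B$ along $J$ with respect to $f$ is the subring $A\bowtie^fJ=\{(a,f(a)+j): a\in A,\ j\in J\}$ of $A\times B$. Let $\iota_A:A\to A\bowtie^fJ$, $\iota_A(x)=(x,f(x))$; for an ideal $\mathfrak a$ of $A$, $\mathfrak a^e$ denotes the ideal $\iota_A(\mathfrak a)(A\bowtie^fJ)$. Koszul grade: for a ring $R$, an $R$-module $M$ and a finitely generated ideal $\mathfrak b$ of $R$ generated by $x_1,\dots,x_\ell$, $\operatorname{Kgrade}_R(\mathfrak b,M)=\inf\{i\ge 0: H^i(\operatorname{Hom}_R(\mathbb K_\bullet(x_1,\dots,x_\ell),M))\neq 0\}$ (with $\inf\emptyset=\infty$), where $\mathbb K_\bullet$ is the Koszul complex; this is independent of the generators. For an arbitrary ideal $\mathfrak a$ of $R$, $\operatorname{Kgrade}_R(\mathfrak a,M)=\sup\{\operatorname{Kgrade}_R(\mathfrak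 b,M):\mathfrak b\subseteq\mathfrak a$ finitely generated ideal$\}$. *)

From HB Require Import structures.
From mathcomp Require Import all_boot all_order all_algebra.
From mathcomp Require Import boolp.
Set Implicit Arguments. Unset Strict Implicit. Unset Printing Implicit Defensive.
Import Order.TTheory GRing.Theory.
Local Open Scope ring_scope.

(* ---------- extended naturals N ∪ {∞}: None = ∞ ---------- *)
Definition enat := option nat.
Definition ele (a b : enat) : bool :=
  match b, a with
  | None, _ => true
  | Some n, Some m => (m <= n)%N
  | Some _, None => false
  end.
Definition emin (a b : enat) : enat := if ele a b then a else b.

Lemma esup_ex (S : enat -> Prop) :
  (exists n, forall g, S g -> ele g (Some n)) ->
  exists n : nat, `[< forall g, S g -> ele g (Some n) >].
Proof. by case=> n Hn; exists n; apply/asboolP. Qed.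
Definition esup (S : enat -> Prop) : enat :=
  match pselect (exists n, forall g, S g -> ele g (Some n)) with
  | left H => Some (ex_minn (esup_ex H))
  | right _ => None
  end.

Definition is_ideal (R : comPzRingType) (I : R -> Prop) : Prop :=
  [/\ I 0, (forall u v, I u -> I v -> I (u + v)) & (forall r u, I u -> I (r * u))].

(* Module M over R given as the submodule P of the Z-module V, R acting by act.
   Hom_R(K_i(x), M) is identified with functions from i-subsets of 'I_l to M
   (K_i = exterior power, basis e_S, #|S| = i).  The coboundary is the dual of
   d(e_S) = sum_{j in S} (-1)^{pos(j,S)} x_j e_{S \ j}. *)
Section Koszul.
Variables (R : comPzRingType) (V : zmodType) (act : R -> V -> V) (P : V -> Prop).
Variables (l : nat) (x : 'I_l -> R).

Definition koszul_d (phi : {set 'I_l} -> V) (S : {set 'I_l}) : V :=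
  \sum_(j in S)
     (if odd #|[set k in S | (k < j)%N]| then - act (x j) (phi (S :\ j))
      else act (x j) (phi (S :\ j))).

Definition koszul_cochain (i : nat) (phi : {set 'I_l} -> V) : Prop :=
  (forall S : {set 'I_l}, P (phi S)) /\ (forall S : {set 'I_l}, #|S| != i -> phi S = 0).

Definition koszul_H_nonzero (i : nat) : Prop :=
  exists phi, [/\ koszul_cochain i phi, (forall S, koszul_d phi S = 0) &
    ~ exists psi, (forall S : {set 'I_l}, P (psi S)) /\ (forall S : {set 'I_l}, #|S|.+1 != i -> psi S = 0)
                  /\ (forall S, koszul_d psi S = phi S)].

Lemma Kgrade_ex (H : exists i, koszul_H_nonzero i) :
  exists i, `[< koszul_H_nonzero i >].
Proof. by case: H => i Hi; exists i; apply/asboolP. Qed.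

(* Kgrade_R((x_1..x_l), M) = inf {i | H^i <> 0}, inf of the empty set = ∞ *)
Definition Kgrade : enat :=
  match pselect (exists i, koszul_H_nonzero i) with
  | left H => Some (ex_minn (Kgrade_ex H))
  | right _ => None
  end.
End Koszul.

(* Kgrade of an arbitrary ideal I: sup over finitely generated subideals,
   i.e. over finite families of generators lying in I. *)
Definition KgradeI (R : comPzRingType) (V : zmodType) (act : R -> V -> V)
  (P : V -> Prop) (I : R -> Prop) : enat :=
  esup (fun g => exists (l : nat) (x : 'I_l -> R),
                   (forall i, I (x i)) /\ g = Kgrade act P x).

(* ---------- amalgamation A ⋈^f J as the subring of A × B ---------- *)
Section Amalg.
Variables (A B : comPzRingType) (f : {rmorphism A -> B}) (J : B -> Prop).

Definition amalg (p : (A * B)%type) : Prop := J (p.2 - f p.1).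
Definition iotaA (a : A) : (A * B)%type := (a, f a).
(* extension a^e = iota(a) (A ⋈^f J) *)
Definition ext_ideal (a : A -> Prop) (z : (A * B)%type) : Prop :=
  exists (n : nat) (u : 'I_n -> A) (r : 'I_n -> (A * B)%type),
    [/\ forall k, a (u k), forall k, amalg (r k) & z = \sum_(k < n) iotaA (u k) * r k].
End Amalg.

Definition regular_act (R : comPzRingType) (r v : R) : R := r * v.
Definition via_act (A B : comPzRingType) (f : {rmorphism A -> B}) (a : A) (v : B) : B :=
  f a * v.
Definition fullset_pred (T : Type) (_ : T) : Prop := True.

(* The maps [(a, f a + j) |-> a] and [(a, f a + j) |-> j] identify
   [A \bowtie^f J], as a module over the generators [iotaA f x_i], with [A \oplus J]
   over the generators [x_i]; Koszul cohomology commutes with this direct sum, so the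
   cohomology of the amalgam vanishes in degree [i] iff that of [A] and of [J] do,
   which is (1).  For (2), generators of a finitely generated ideal inside [a^e] lie in
   the ideal generated by finitely many [iotaA f u] with [u \in a].  Adding generators
   cannot lower the Koszul grade (the Koszul complex is a mapping cone), and dropping a
   generator that is a combination of the others cannot lower it either (multiplication
   by such an element is null-homotopic).  Hence the grade of the given generators is at
   most that of the [iotaA f u], which (1) computes as a minimum bounded by the right
   hand side of (2). *)

From HB Require Import structures.
From mathcomp Require Import all_boot all_order all_algebra.
From mathcomp Require Import boolp zify ring.
Set Implicit Arguments. Unset Strict Implicit. Unset Printing Implicit Defensive.
Import GRing.Theory.
Local Open Scope ring_scope.

Lemma ele_refl (a : enat) : ele a a.
Proof. by case: a => //= a; rewrite leqnn. Qed.

Lemma ele_trans (a b c : enat) : ele a b -> ele b c -> ele a c.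
Proof. by case: c => [c|]; case: b => [b|]; case: a => [a|] //=; apply: leq_trans. Qed.

Lemma ele_anti (a b : enat) : ele a b -> ele b a -> a = b.
Proof.
by case: a => [a|]; case: b => [b|] //= ab ba; congr Some; apply/eqP; rewrite eqn_leq ab.
Qed.

Lemma ele_by_nat (a b : enat) : (forall n, ele (Some n) a -> ele (Some n) b) -> ele a b.
Proof.
case: b => [b|] ab; last by case: a ab.
by case: a ab => [a|] ab; [exact: ab a (leqnn a) | have := ab b.+1 isT; rewrite /= ltnn].
Qed.

Lemma ele_emin n (a b : enat) : ele (Some n) (emin a b) = ele (Some n) a && ele (Some n) b.
Proof.
rewrite /emin; case: a => [a|]; case: b => [b|] //=; rewrite ?andbT //.
by case: ifP => /= h; lia.
Qed.

Lemma emin_ele2 (a b a' b' : enat) : ele a a' -> ele b b' -> ele (emin a b) (emin a' b').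
Proof.
move=> aa bb; apply: ele_by_nat => n; rewrite !ele_emin => /andP[na nb].
by rewrite (ele_trans na aa) (ele_trans nb bb).
Qed.

Lemma ele_esup (S : enat -> Prop) g : S g -> ele g (esup S).
Proof.
rewrite /esup; case: pselect => // bounded Sg.
by case: ex_minnP => m /asboolP + _; apply.
Qed.

Lemma esup_ele (S : enat -> Prop) b : (forall g, S g -> ele g b) -> ele (esup S) b.
Proof.
case: b => [b|] Sb; last by case: (esup S).
rewrite /esup; case: pselect => [bounded|]; last by case; exists b.
by case: ex_minnP => m _; apply; apply/asboolP.
Qed.

Section Signs.
Variable V : zmodType.

Definition signv (n : nat) (v : V) := if odd n then - v else v.

Lemma signvS n v : signv n.+1 v = - signv n v.
Proof. by rewrite /signv /=; case: (odd n); rewrite ?opprK. Qed.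

Lemma signv_addn n m v : signv (n + m) v = signv n (signv m v).
Proof. by rewrite /signv oddD; case: (odd n); case: (odd m); rewrite /= ?opprK. Qed.

Lemma signvK n : involutive (signv n).
Proof. by move=> v; rewrite -signv_addn addnn /signv odd_double. Qed.

Lemma signvD n : {morph signv n : u v / u + v}.
Proof. by move=> u v; rewrite /signv; case: (odd n); rewrite ?opprD. Qed.

Lemma signv0 n : signv n 0 = 0.
Proof. by rewrite /signv oppr0; case: (odd n). Qed.

Lemma signvN n : {morph signv n : v / - v}.
Proof. by move=> v; rewrite /signv; case: (odd n). Qed.

End Signs.

Section AdditiveMaps.
Variables (U V : zmodType) (h : U -> V).
Hypothesis hD : {morph h : u v / u + v}.

Lemma addmorph0 : h 0 = 0.
Proof. by apply: (@addrI _ (h 0)); rewrite -hD !addr0. Qed.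

Lemma addmorphN : {morph h : v / - v}.
Proof. by move=> v; apply/eqP; rewrite -subr_eq0 opprK -hD addNr addmorph0. Qed.

Lemma addmorph_sum I (r : seq I) (Q : pred I) (F : I -> U) :
  h (\sum_(i <- r | Q i) F i) = \sum_(i <- r | Q i) h (F i).
Proof. by apply: big_morph; [exact: hD | exact: addmorph0]. Qed.

Lemma addmorph_signv n v : h (signv n v) = signv n (h v).
Proof. by rewrite /signv; case: (odd n); rewrite ?addmorphN. Qed.

End AdditiveMaps.

Lemma signv_sum (V : zmodType) n I (r : seq I) (Q : pred I) (F : I -> V) :
  signv n (\sum_(i <- r | Q i) F i) = \sum_(i <- r | Q i) signv n (F i).
Proof. by apply: addmorph_sum; apply: signvD. Qed.

Definition nbelow l (S : {set 'I_l}) (j : 'I_l) := #|[set k in S | (k < j)%N]|.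

Lemma nbelowU1 l (S : {set 'I_l}) (k j : 'I_l) :
  k \notin S -> nbelow (k |: S) j = ((k < j) + nbelow S j)%N.
Proof.
move=> kS; rewrite /nbelow; case: ltnP => [kj | jk].
  have -> : [set t in k |: S | (t < j)%N] = k |: [set t in S | (t < j)%N].
    by apply/setP => t; rewrite !inE; case: eqP => [->|]; rewrite ?kj.
  by rewrite cardsU1 inE (negPf kS).
apply: eq_card => t; rewrite !inE; case: eqP => [->|] //=.
by rewrite ltnNge jk andbF.
Qed.

Lemma nbelowU1_self l (S : {set 'I_l}) k : nbelow (k |: S) k = nbelow S k.
Proof. by apply: eq_card => t; rewrite !inE; case: eqP => [->|]; rewrite ?ltnn ?andbF. Qed.

Lemma nbelow_swap l (S : {set 'I_l}) j k : j \in S -> k \notin S ->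
  (nbelow S k + nbelow (k |: S) j = (nbelow S j + nbelow (S :\ j) k).+1)%N.
Proof.
move=> jS kS; have kj : (k : nat) != j by apply: contraNneq kS => /val_inj ->.
rewrite nbelowU1 // -{1}(setD1K jS) nbelowU1 ?setD11 //.
by case: ltngtP kj => //= _ _; lia.
Qed.

Lemma koszul_dE (R : comPzRingType) (V : zmodType) (act : R -> V -> V) l (x : 'I_l -> R)
    phi S :
  koszul_d act x phi S = \sum_(j in S) signv (nbelow S j) (act (x j) (phi (S :\ j))).
Proof. by []. Qed.

Lemma koszul_d_morph (R R' : comPzRingType) (V V' : zmodType)
    (act : R -> V -> V) (act' : R' -> V' -> V') l (x : 'I_l -> R) (x' : 'I_l -> R')
    (h : V -> V') :
  {morph h : u v / u + v} -> (forall j v, h (act (x j) v) = act' (x' j) (h v)) ->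
  forall phi S, h (koszul_d act x phi S) = koszul_d act' x' (fun T => h (phi T)) S.
Proof.
move=> hD h_act phi S; rewrite !koszul_dE addmorph_sum //.
by apply: eq_bigr => j _; rewrite addmorph_signv // h_act.
Qed.

Section KoszulDifferential.
Variables (R : comPzRingType) (V : zmodType) (act : R -> V -> V) (l : nat).
Variable x : 'I_l -> R.

Lemma eq_koszul_d phi psi S : (forall T, phi T = psi T) ->
  koszul_d act x phi S = koszul_d act x psi S.
Proof. by move=> e; apply: eq_bigr => j _; rewrite e. Qed.

Hypothesis actD : forall r, {morph act r : u v / u + v}.

Lemma act0 r : act r 0 = 0.
Proof. exact: addmorph0. Qed.

Lemma actN r : {morph act r : v / - v}.
Proof. exact: addmorphN. Qed.

Lemma act_signv r n v : act r (signv n v) = signv n (act r v).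
Proof. by apply: addmorph_signv; apply: actD. Qed.

Lemma act_sum r I (s : seq I) (Q : pred I) (F : I -> V) :
  act r (\sum_(i <- s | Q i) F i) = \sum_(i <- s | Q i) act r (F i).
Proof. by apply: addmorph_sum; apply: actD. Qed.

Lemma koszul_dD phi psi S :
  koszul_d act x (fun T => phi T + psi T) S = koszul_d act x phi S + koszul_d act x psi S.
Proof. by rewrite !koszul_dE -big_split; apply: eq_bigr => j _; rewrite actD signvD. Qed.

Lemma koszul_dN phi S : koszul_d act x (fun T => - phi T) S = - koszul_d act x phi S.
Proof. by rewrite !koszul_dE -sumrN; apply: eq_bigr => j _; rewrite actN signvN. Qed.

Lemma koszul_dB phi psi S :
  koszul_d act x (fun T => phi T - psi T) S = koszul_d act x phi S - koszul_d act x psi S.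
Proof. by rewrite koszul_dD koszul_dN. Qed.

Lemma koszul_d0 S : koszul_d act x (fun _ => 0) S = 0.
Proof. by rewrite koszul_dE big1 // => j _; rewrite act0 signv0. Qed.

Lemma koszul_d_signv n phi S :
  koszul_d act x (fun T => signv n (phi T)) S = signv n (koszul_d act x phi S).
Proof.
by rewrite -(koszul_d_morph (act := act) (x := x) (signvD n)) // => j v; rewrite act_signv.
Qed.

End KoszulDifferential.

Lemma setU1D1 (T : finType) (A : {set T}) a b :
  a != b -> (a |: A) :\ b = a |: (A :\ b).
Proof.
move=> ab; apply/setP => t; rewrite !inE.
by case: (eqVneq t b) => [->|] //=; rewrite eq_sym (negPf ab).
Qed.

Section LiftSets.
Variables (l : nat) (p : 'I_l.+1).
Implicit Types (T : {set 'I_l}) (i j : 'I_l).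

Lemma ltn_lift i j : (lift p i < lift p j)%N = (i < j)%N.
Proof. by rewrite /= /bump; case: (leqP p i); case: (leqP p j) => /=; lia. Qed.

Lemma ltn_pivot_lift j : (p < lift p j)%N = (p <= j)%N.
Proof. by rewrite /= /bump; case: leqP => /=; lia. Qed.

Lemma mem_imset_lift T j : (lift p j \in lift p @: T) = (j \in T).
Proof. exact: mem_imset (@lift_inj _ p). Qed.

Lemma notin_imset_lift T : p \notin lift p @: T.
Proof. by apply/imsetP => -[j _ /eqP]; rewrite (negPf (neq_lift p j)). Qed.

Lemma preimset_imset_lift T : lift p @^-1: (lift p @: T) = T.
Proof. by apply/setP => j; rewrite inE mem_imset_lift. Qed.

Lemma preimset_liftU1 T : lift p @^-1: (p |: lift p @: T) = T.
Proof. by apply/setP => j; rewrite !inE mem_imset_lift eq_sym (negPf (neq_lift p j)). Qed.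

Lemma card_imset_lift T : #|lift p @: T| = #|T|.
Proof. exact: card_imset (@lift_inj _ p). Qed.

Lemma card_liftU1 T : #|p |: lift p @: T| = #|T|.+1.
Proof. by rewrite cardsU1 notin_imset_lift card_imset_lift. Qed.

Lemma imset_liftD1 T j : lift p @: (T :\ j) = (lift p @: T) :\ lift p j.
Proof.
apply/setP => k; case: (unliftP p k) => [k' ->|->].
  by rewrite in_setD1 !mem_imset_lift in_setD1 (inj_eq (@lift_inj _ p)).
by rewrite in_setD1 !(negPf (notin_imset_lift _)) andbF.
Qed.

Lemma nbelow_imset_lift T j : nbelow (lift p @: T) (lift p j) = nbelow T j.
Proof.
rewrite /nbelow -[RHS](card_imset _ (@lift_inj _ p)); apply: eq_card => k.
case: (unliftP p k) => [k' ->|->]; first by rewrite !inE !mem_imset_lift inE ltn_lift.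
by rewrite inE !(negPf (notin_imset_lift _)).
Qed.

Lemma nbelow_liftU1 T j : nbelow (p |: lift p @: T) (lift p j) = (nbelow T j + (p <= j))%N.
Proof. by rewrite nbelowU1 ?notin_imset_lift // ltn_pivot_lift nbelow_imset_lift addnC. Qed.

Lemma set_lift_ind (Q : {set 'I_l.+1} -> Prop) :
  (forall T, Q (lift p @: T)) -> (forall T, Q (p |: lift p @: T)) -> forall S, Q S.
Proof.
move=> Q0 Q1 S; suff -> : S = if p \in S then p |: lift p @: (lift p @^-1: S)
                              else lift p @: (lift p @^-1: S) by case: ifP.
apply/setP => k; case: (unliftP p k) => [k' ->|->].
  by case: ifP; rewrite ?inE mem_imset_lift inE // eq_sym (negPf (neq_lift p k')).
by case: ifP => pS; rewrite ?setU11 ?(negPf (notin_imset_lift _)) ?pS.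
Qed.

Section Glue.
Variables (V : Type) (f0 f1 : {set 'I_l} -> V).

Definition glue (S : {set 'I_l.+1}) : V :=
  if p \in S then f1 (lift p @^-1: S) else f0 (lift p @^-1: S).

Lemma glue_imset T : glue (lift p @: T) = f0 T.
Proof. by rewrite /glue (negPf (notin_imset_lift _)) preimset_imset_lift. Qed.

Lemma glue_liftU1 T : glue (p |: lift p @: T) = f1 T.
Proof. by rewrite /glue setU11 preimset_liftU1. Qed.

End Glue.

Variables (R : comPzRingType) (V : zmodType) (act : R -> V -> V) (x : 'I_l.+1 -> R).
Implicit Type phi : {set 'I_l.+1} -> V.

Lemma koszul_d_imset_lift phi T :
  koszul_d act x phi (lift p @: T) =
  koszul_d act (fun i => x (lift p i)) (fun U => phi (lift p @: U)) T.
Proof.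
rewrite !koszul_dE big_imset /=; last exact: in2W (@lift_inj _ p).
by apply: eq_bigr => j _; rewrite nbelow_imset_lift imset_liftD1.
Qed.

Lemma koszul_d_liftU1 phi T :
  koszul_d act x phi (p |: lift p @: T) =
  signv (nbelow (lift p @: T) p) (act (x p) (phi (lift p @: T))) +
  \sum_(j in T) signv (nbelow T j + (p <= j))
                  (act (x (lift p j)) (phi (p |: lift p @: (T :\ j)))).
Proof.
rewrite koszul_dE big_setU1 ?notin_imset_lift //= nbelowU1_self setU1K ?notin_imset_lift //.
rewrite big_imset /=; last exact: in2W (@lift_inj _ p).
congr (_ + _); apply: eq_bigr => j _.
by rewrite nbelow_liftU1 setU1D1 ?neq_lift // imset_liftD1.
Qed.

End LiftSets.

Lemma sum_notin_setD1 (V : zmodType) l (S : {set 'I_l}) j (F : 'I_l -> V) : j \in S ->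
  \sum_(k | k \notin S :\ j) F k = F j + \sum_(k | k \notin S) F k.
Proof.
move=> jS; rewrite (bigD1 j) ?setD11 //=; congr (_ + _); apply: eq_bigl => k.
by rewrite in_setD1; case: (eqVneq k j) => [->|] /=; rewrite ?jS ?andbT.
Qed.

Section KoszulHomotopy.
Variables (R : comPzRingType) (V : zmodType) (act : R -> V -> V).
Hypothesis actD : forall r, {morph act r : u v / u + v}.
Hypothesis act_comm : forall r s v, act r (act s v) = act s (act r v).
Variables (l : nat) (z c : 'I_l -> R).
Implicit Types (phi : {set 'I_l} -> V) (S : {set 'I_l}).

Definition koszul_htpy phi S : V :=
  \sum_(k | k \notin S) signv (nbelow S k) (act (c k) (phi (k |: S))).

Lemma koszul_d_htpy phi S :
  koszul_d act z (koszul_htpy phi) S =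
  \sum_(j in S) act (c j) (act (z j) (phi S)) +
  \sum_(j in S) \sum_(k | k \notin S) signv (nbelow S j + nbelow (S :\ j) k)
                                       (act (c k) (act (z j) (phi (k |: S :\ j)))).
Proof.
rewrite koszul_dE -big_split; apply: eq_bigr => j jS /=.
rewrite /koszul_htpy sum_notin_setD1 // actD signvD; congr (_ + _).
  have -> : nbelow (S :\ j) j = nbelow S j by rewrite -{2}(setD1K jS) nbelowU1_self.
  by rewrite setD1K // act_signv // signvK act_comm.
rewrite act_sum // signv_sum; apply: eq_bigr => k _.
by rewrite act_signv // -signv_addn act_comm.
Qed.

Lemma htpy_koszul_d phi S :
  koszul_htpy (koszul_d act z phi) S =
  \sum_(k | k \notin S) act (c k) (act (z k) (phi S)) +
  \sum_(k | k \notin S) \sum_(j in S) signv (nbelow S k + nbelow (k |: S) j)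
                                        (act (c k) (act (z j) (phi ((k |: S) :\ j)))).
Proof.
rewrite /koszul_htpy -big_split; apply: eq_bigr => k kS /=.
rewrite koszul_dE big_setU1 //= actD signvD; congr (_ + _).
  by rewrite nbelowU1_self setU1K // act_signv // signvK.
rewrite act_sum // signv_sum; apply: eq_bigr => j _.
by rewrite act_signv // signv_addn.
Qed.

(* Multiplication by [\sum_k c_k z_k] is null-homotopic on the Koszul complex of [z]. *)
Lemma koszul_homotopy phi S :
  koszul_d act z (koszul_htpy phi) S + koszul_htpy (koszul_d act z phi) S =
  \sum_k act (c k) (act (z k) (phi S)).
Proof.
rewrite koszul_d_htpy htpy_koszul_d addrACA [RHS](bigID (mem S)) /= -[RHS]addr0.
congr (_ + _); rewrite [X in _ + X]exchange_big /= -big_split big1 // => j jS /=.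
rewrite -big_split big1 // => k kS /=.
have kj : k != j by apply: contraNneq kS => ->.
by rewrite setU1D1 // nbelow_swap // signvS addrN.
Qed.

End KoszulHomotopy.

Section KoszulLiftEnds.
Variables (R : comPzRingType) (V : zmodType) (act : R -> V -> V) (l : nat).
Variables (x : 'I_l.+1 -> R) (phi : {set 'I_l.+1} -> V) (T : {set 'I_l}).

Lemma koszul_d_lift0U1 :
  koszul_d act x phi (ord0 |: lift ord0 @: T) =
  act (x ord0) (phi (lift ord0 @: T)) -
  koszul_d act (fun i => x (lift ord0 i)) (fun U => phi (ord0 |: lift ord0 @: U)) T.
Proof.
rewrite koszul_d_liftU1 koszul_dE -sumrN; congr (_ + _).
  suff -> : nbelow (lift ord0 @: T) ord0 = 0%N by [].
  by apply/eqP; rewrite cards_eq0; apply/eqP/setP => k; rewrite !inE ltn0 andbF.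
by apply: eq_bigr => j _; rewrite addn1 signvS.
Qed.

Lemma koszul_d_lift_maxU1 :
  koszul_d act x phi (ord_max |: lift ord_max @: T) =
  signv #|T| (act (x ord_max) (phi (lift ord_max @: T))) +
  koszul_d act (fun i => x (lift ord_max i)) (fun U => phi (ord_max |: lift ord_max @: U)) T.
Proof.
rewrite koszul_d_liftU1 koszul_dE; congr (_ + _).
  suff -> : nbelow (lift ord_max @: T) ord_max = #|T| by [].
  rewrite -(card_imset T (@lift_inj _ ord_max)); apply: eq_card => k.
  rewrite inE andb_idr // => /imsetP[[j ltjl] _ ->] /=.
  by rewrite /bump (negbTE (_ : ~~ (l <= j)%N)) // -ltnNge.
by apply: eq_bigr => j _; rewrite leqNgt ltn_ord addn0.
Qed.

End KoszulLiftEnds.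

Section KoszulExactness.
Variables (R : comPzRingType) (V : zmodType) (act : R -> V -> V) (P : V -> Prop).

Definition koszul_cocycle l (x : 'I_l -> R) (phi : {set 'I_l} -> V) :=
  forall S, koszul_d act x phi S = 0.

Definition koszul_coboundary l (x : 'I_l -> R) i (phi : {set 'I_l} -> V) :=
  exists psi, [/\ forall S : {set 'I_l}, P (psi S),
                  forall S : {set 'I_l}, #|S|.+1 != i -> psi S = 0 &
                  forall S, koszul_d act x psi S = phi S].

Definition koszul_exact_below n l (x : 'I_l -> R) :=
  forall i, (i < n)%N -> ~ koszul_H_nonzero act P x i.

Lemma koszul_H_nonzeroP l (x : 'I_l -> R) i :
  koszul_H_nonzero act P x i <->
  exists phi, [/\ koszul_cochain P i phi, koszul_cocycle x phi & ~ koszul_coboundary x i phi].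
Proof.
split=> -[phi [phi_i dphi nb]]; exists phi; split=> // -[psi].
  by move=> [Ppsi psi_supp dpsi]; apply: nb; exists psi.
by move=> [Ppsi [psi_supp dpsi]]; apply: nb; exists psi.
Qed.

Lemma koszul_H_zero_coboundary l (x : 'I_l -> R) i phi :
  ~ koszul_H_nonzero act P x i -> koszul_cochain P i phi -> koszul_cocycle x phi ->
  koszul_coboundary x i phi.
Proof. by move=> H0 phi_i dphi; apply: contrapT => nb; apply/H0/koszul_H_nonzeroP; exists phi. Qed.

Lemma koszul_exact_coboundary n l (x : 'I_l -> R) i phi :
  koszul_exact_below n x -> (i < n)%N -> koszul_cochain P i phi -> koszul_cocycle x phi ->
  koszul_coboundary x i phi.
Proof. by move=> exx ltin; apply/koszul_H_zero_coboundary/exx. Qed.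

Lemma Kgrade_geP n l (x : 'I_l -> R) :
  ele (Some n) (Kgrade act P x) <-> koszul_exact_below n x.
Proof.
rewrite /Kgrade; case: pselect => [H|H]; last by split=> // _ i _ Hi; apply: H; exists i.
case: ex_minnP => m /asboolP Hm m_min /=; split.
  move=> le_nm i lt_in Hi; have := m_min i (introT (asboolP _) Hi).
  by move=> le_mi; move: (leq_trans lt_in (leq_trans le_nm le_mi)); rewrite ltnn.
by move=> exx; rewrite leqNgt; apply/negP => lt_mn; exact: exx m lt_mn Hm.
Qed.

Lemma Kgrade_leP l m (x : 'I_l -> R) (y : 'I_m -> R) :
  (forall n, koszul_exact_below n x -> koszul_exact_below n y) ->
  ele (Kgrade act P x) (Kgrade act P y).
Proof. by move=> xy; apply: ele_by_nat => n /Kgrade_geP/xy/Kgrade_geP. Qed.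

Lemma Kgrade_cast l l' (e : l = l') (x : 'I_l -> R) (x' : 'I_l' -> R) :
  (forall i, x' (cast_ord e i) = x i) -> Kgrade act P x' = Kgrade act P x.
Proof.
by case: l' / e x' => x' ex; congr Kgrade; apply/funext => i; rewrite -ex cast_ord_id.
Qed.

Hypothesis actD : forall r, {morph act r : u v / u + v}.
Hypothesis act_comm : forall r s v, act r (act s v) = act s (act r v).
Hypotheses (P0 : P 0) (PB : forall u v, P u -> P v -> P (u - v)).

Lemma subgroupN v : P v -> P (- v).
Proof. by move=> Pv; rewrite -sub0r; apply: PB. Qed.

Lemma subgroupD u v : P u -> P v -> P (u + v).
Proof. by move=> Pu Pv; rewrite -[v]opprK; apply/PB/subgroupN. Qed.

Lemma subgroup_signv n v : P v -> P (signv n v).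
Proof. by rewrite /signv; case: (odd n) => // /subgroupN. Qed.

Lemma subgroup_sum I (r : seq I) (Q : pred I) (F : I -> V) :
  (forall i, Q i -> P (F i)) -> P (\sum_(i <- r | Q i) F i).
Proof. by move=> PF; apply: big_ind => //; apply: subgroupD. Qed.

Lemma koszul_d_act l (x : 'I_l -> R) r phi S :
  koszul_d act x (fun T => act r (phi T)) S = act r (koszul_d act x phi S).
Proof.
by rewrite (koszul_d_morph (act' := act) (x' := x) (actD r)) // => j v; rewrite act_comm.
Qed.

(* The Koszul complex of [x] is the mapping cone of [act (x ord0)] on that of [z]. *)
Lemma Kgrade_lift0_le l (x : 'I_l.+1 -> R) :
  (forall v, P v -> P (act (x ord0) v)) ->
  ele (Kgrade act P (fun i => x (lift ord0 i))) (Kgrade act P x).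
Proof.
move=> Px0; apply: Kgrade_leP => n exz i ltin.
move/koszul_H_nonzeroP => -[phi [[Pphi phi_supp] dphi nb]]; apply: nb.
pose z (i : 'I_l) := x (lift ord0 i).
pose phi0 (T : {set 'I_l}) := phi (lift ord0 @: T).
pose phi1 (T : {set 'I_l}) := phi (ord0 |: lift ord0 @: T).
have dphi1 (T : {set 'I_l}) : koszul_d act z phi1 T = act (x ord0) (phi0 T).
  by apply/eqP; rewrite eq_sym -subr_eq0 -koszul_d_lift0U1 dphi.
have [psi0 [Ppsi0 psi0_supp dpsi0]] : koszul_coboundary z i phi0.
  apply: (koszul_exact_coboundary exz ltin); last by move=> T; rewrite -koszul_d_imset_lift.
  by split=> T; [apply: Pphi | rewrite -(card_imset_lift ord0 T); apply: phi_supp].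
pose chi (T : {set 'I_l}) := phi1 T - act (x ord0) (psi0 T).
have chi_supp (T : {set 'I_l}) : #|T|.+1 != i -> chi T = 0.
  by move=> ?; rewrite /chi /phi1 psi0_supp // (act0 actD) subr0 phi_supp // card_liftU1.
have [rho [Prho rho_supp drho]] : exists rho, [/\ forall T, P (rho T),
    forall T : {set 'I_l}, #|T|.+2 != i -> rho T = 0 & forall T, koszul_d act z rho T = chi T].
  case: i => [|i] in ltin phi_supp psi0_supp chi_supp *.
    by exists (fun _ => 0); split=> // T; rewrite koszul_d0 // chi_supp.
  have chi_i : koszul_cochain P i chi.
    by split=> T; [apply: PB; [apply: Pphi | apply: Px0] | apply: chi_supp].
  have dchi : koszul_cocycle z chi.
    by move=> T; rewrite koszul_dB // koszul_d_act dpsi0 dphi1 subrr.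
  by have [rho ?] := koszul_exact_coboundary exz (ltnW ltin) chi_i dchi; exists rho.
exists (glue ord0 psi0 (fun T => - rho T)); split; apply: (set_lift_ind (p := ord0)) => T.
- by rewrite glue_imset.
- by rewrite glue_liftU1; apply/subgroupN/Prho.
- by rewrite glue_imset card_imset_lift; apply: psi0_supp.
- by rewrite glue_liftU1 card_liftU1 => /rho_supp ->; rewrite oppr0.
- rewrite koszul_d_imset_lift -[RHS]/(phi0 T) -dpsi0.
  by apply: eq_koszul_d => U; rewrite glue_imset.
rewrite koszul_d_lift0U1 glue_imset (eq_koszul_d _ _ (psi := fun U => - rho U)) => [|U].
  by rewrite koszul_dN // drho opprK /chi addrC subrK.
by rewrite glue_liftU1.
Qed.

(* The homotopy [koszul_htpy c] extends a cocycle [phi] for [z] to the cocycle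
   [glue ord_max phi chi] for [x], since [x ord_max] acts as [\sum_k c_k z_k]. *)
Lemma Kgrade_le_lift_max l (x : 'I_l.+1 -> R) (c : 'I_l -> R) :
  (forall k v, P v -> P (act (c k) v)) ->
  (forall v, act (x ord_max) v = \sum_k act (c k) (act (x (lift ord_max k)) v)) ->
  ele (Kgrade act P x) (Kgrade act P (fun i => x (lift ord_max i))).
Proof.
move=> Pc x_max; apply: Kgrade_leP => n exx i ltin.
move/koszul_H_nonzeroP => -[phi [[Pphi phi_supp] dphi nb]]; apply: nb.
pose z (i : 'I_l) := x (lift ord_max i).
pose chi (T : {set 'I_l}) := - signv i (koszul_htpy act c phi T).
have dchi (T : {set 'I_l}) : koszul_d act z chi T = - signv i (act (x ord_max) (phi T)).
  have htpy_dphi : koszul_htpy act c (koszul_d act z phi) T = 0.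
    by rewrite /koszul_htpy big1 // => k _; rewrite dphi (act0 actD) signv0.
  rewrite koszul_dN // koszul_d_signv // x_max -(koszul_homotopy actD act_comm).
  by rewrite htpy_dphi addr0.
have [Psi [PPsi Psi_supp dPsi]] : koszul_coboundary x i (glue ord_max phi chi).
  apply: (koszul_exact_coboundary exx ltin); first split; apply: (set_lift_ind (p := ord_max)) => T.
  - by rewrite glue_imset.
  - rewrite glue_liftU1; apply/subgroupN/subgroup_signv/subgroup_sum => k _.
    by apply/subgroup_signv/Pc.
  - by rewrite glue_imset card_imset_lift; apply: phi_supp.
  - rewrite glue_liftU1 card_liftU1 => ?; rewrite /chi /koszul_htpy big1 ?signv0 ?oppr0 // => k kT.
    by rewrite phi_supp ?(act0 actD) ?signv0 // cardsU1 kT.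
  - by rewrite koszul_d_imset_lift -(dphi T); apply: eq_koszul_d => U; rewrite glue_imset.
  rewrite koszul_d_lift_maxU1 glue_imset (eq_koszul_d _ _ (psi := chi)) => [|U]; last first.
    by rewrite glue_liftU1.
  rewrite dchi; have [->|ne_Ti] := eqVneq #|T| i; first by rewrite subrr.
  by rewrite phi_supp // (act0 actD) !signv0 subrr.
exists (fun T : {set 'I_l} => Psi (lift ord_max @: T)); split=> [T | T | T].
- exact: PPsi.
- by rewrite -(card_imset_lift ord_max T); apply: Psi_supp.
- by rewrite -koszul_d_imset_lift dPsi glue_imset.
Qed.

End KoszulExactness.

Section KoszulRetract.
Variables (R R1 : comPzRingType) (V V1 : zmodType).
Variables (act : R -> V -> V) (act1 : R1 -> V1 -> V1) (P : V -> Prop) (P1 : V1 -> Prop).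
Variables (l : nat) (x : 'I_l -> R) (x1 : 'I_l -> R1) (p : V -> V1) (s : V1 -> V).
Hypotheses (ps : forall a, p (s a) = a) (p0 : p 0 = 0) (s0 : s 0 = 0).
Hypotheses (Pp : forall v, P v -> P1 (p v)) (Ps : forall a, P1 a -> P (s a)).
Hypothesis p_d :
  forall phi S, p (koszul_d act x phi S) = koszul_d act1 x1 (fun T => p (phi T)) S.
Hypothesis s_d :
  forall phi S, koszul_d act x (fun T => s (phi T)) S = s (koszul_d act1 x1 phi S).

Lemma koszul_H_nonzero_retract i :
  koszul_H_nonzero act1 P1 x1 i -> koszul_H_nonzero act P x i.
Proof.
move/koszul_H_nonzeroP => -[phi [[Pphi phi_supp] dphi nb]].
apply/koszul_H_nonzeroP; exists (fun T => s (phi T)); split.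
- by split=> [S | S /phi_supp ->]; first exact/Ps/Pphi.
- by move=> S; rewrite s_d dphi.
move=> [psi [Ppsi psi_supp dpsi]]; apply: nb; exists (fun T => p (psi T)); split.
- by move=> S; apply/Pp.
- by move=> S /psi_supp ->.
- by move=> S; rewrite -p_d dpsi ps.
Qed.

End KoszulRetract.

Section KoszulDirectSum.
Variables (R R1 R2 : comPzRingType) (V V1 V2 : zmodType).
Variables (act : R -> V -> V) (act1 : R1 -> V1 -> V1) (act2 : R2 -> V2 -> V2).
Variables (P : V -> Prop) (P1 : V1 -> Prop) (P2 : V2 -> Prop).
Variables (l : nat) (x : 'I_l -> R) (x1 : 'I_l -> R1) (x2 : 'I_l -> R2).
Variables (p1 : V -> V1) (p2 : V -> V2) (pairv : V1 -> V2 -> V).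
Hypotheses (act1D : forall r, {morph act1 r : u v / u + v})
           (act2D : forall r, {morph act2 r : u v / u + v}).
Hypotheses (p1D : {morph p1 : u v / u + v}) (p2D : {morph p2 : u v / u + v}).
Hypotheses (p1_act : forall j v, p1 (act (x j) v) = act1 (x1 j) (p1 v))
           (p2_act : forall j v, p2 (act (x j) v) = act2 (x2 j) (p2 v)).
Hypotheses (p1_pairv : forall a b, p1 (pairv a b) = a) (p2_pairv : forall a b, p2 (pairv a b) = b)
           (pairv_proj : forall v, pairv (p1 v) (p2 v) = v).
Hypotheses (PE : forall v, P v <-> P1 (p1 v) /\ P2 (p2 v)) (P1_0 : P1 0) (P2_0 : P2 0).

Lemma pairv00 : pairv 0 0 = 0.
Proof. by rewrite -(addmorph0 p1D) -(addmorph0 p2D) pairv_proj. Qed.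

Lemma koszul_d_pairv a b S :
  koszul_d act x (fun T => pairv (a T) (b T)) S =
  pairv (koszul_d act1 x1 a S) (koszul_d act2 x2 b S).
Proof.
rewrite -[LHS]pairv_proj (koszul_d_morph p1D p1_act) (koszul_d_morph p2D p2_act).
by congr pairv; apply: eq_koszul_d => T; rewrite ?p1_pairv ?p2_pairv.
Qed.

Lemma koszul_H_nonzero_direct_sum i :
  koszul_H_nonzero act P x i <->
  koszul_H_nonzero act1 P1 x1 i \/ koszul_H_nonzero act2 P2 x2 i.
Proof.
split=> [|[]]; last first.
- apply: (koszul_H_nonzero_retract (p := p2) (s := pairv 0) (p2_pairv 0) (addmorph0 p2D) pairv00).
  + by move=> v /PE[].
  + by move=> b Pb; apply/PE; rewrite p1_pairv p2_pairv.
  + exact: koszul_d_morph.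
  + by move=> phi S; rewrite koszul_d_pairv koszul_d0.
- apply: (koszul_H_nonzero_retract (p := p1) (s := pairv^~ 0) (p1_pairv^~ 0)
            (addmorph0 p1D) pairv00).
  + by move=> v /PE[].
  + by move=> a Pa; apply/PE; rewrite p1_pairv p2_pairv.
  + exact: koszul_d_morph.
  + by move=> phi S; rewrite koszul_d_pairv koszul_d0.
move/koszul_H_nonzeroP => -[phi [[Pphi phi_supp] dphi nb]].
apply: contrapT => /not_orP[H1 H2]; apply: nb.
have [||psi1 [Ppsi1 psi1_supp dpsi1]] := koszul_H_zero_coboundary H1 (phi := fun T => p1 (phi T)).
- by split=> [S | S /phi_supp ->]; [case/PE: (Pphi S) | exact: addmorph0].
- by move=> S; rewrite -(koszul_d_morph p1D p1_act) dphi addmorph0.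
have [||psi2 [Ppsi2 psi2_supp dpsi2]] := koszul_H_zero_coboundary H2 (phi := fun T => p2 (phi T)).
- by split=> [S | S /phi_supp ->]; [case/PE: (Pphi S) | exact: addmorph0].
- by move=> S; rewrite -(koszul_d_morph p2D p2_act) dphi addmorph0.
exists (fun T => pairv (psi1 T) (psi2 T)); split.
- by move=> S; apply/PE; rewrite p1_pairv p2_pairv.
- by move=> S sS; rewrite psi1_supp ?psi2_supp ?pairv00.
- by move=> S; rewrite koszul_d_pairv dpsi1 dpsi2 pairv_proj.
Qed.

Lemma Kgrade_direct_sum : Kgrade act P x = emin (Kgrade act1 P1 x1) (Kgrade act2 P2 x2).
Proof.
apply: ele_anti; apply: ele_by_nat => n; rewrite ele_emin.
  move/Kgrade_geP => exx; apply/andP; split; apply/Kgrade_geP => i ltin Hi;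
    apply: (exx i ltin); apply/koszul_H_nonzero_direct_sum; by [left | right].
case/andP => /Kgrade_geP ex1 /Kgrade_geP ex2; apply/Kgrade_geP => i ltin.
by case/koszul_H_nonzero_direct_sum; [apply: ex1 | apply: ex2].
Qed.

End KoszulDirectSum.

Lemma regular_actD (R : comPzRingType) (r : R) : {morph regular_act r : u v / u + v}.
Proof. by move=> u v; rewrite /regular_act mulrDr. Qed.

Lemma regular_act_comm (R : comPzRingType) (r s v : R) :
  regular_act r (regular_act s v) = regular_act s (regular_act r v).
Proof. by rewrite /regular_act mulrCA. Qed.

Definition nthf (R : zmodType) (s : seq R) : 'I_(size s) -> R := fun i => s`_i.
Arguments nthf {R} s.

Section SubringKoszul.
Variables (R : comPzRingType) (P : R -> Prop).
Hypotheses (P1 : P 1) (PB : forall u v, P u -> P v -> P (u - v)).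
Hypothesis PM : forall u v, P u -> P v -> P (u * v).

Lemma subring0 : P 0.
Proof. by rewrite -(subrr 1); apply: PB. Qed.

Definition ideal_span (s : seq R) (v : R) :=
  exists2 c : 'I_(size s) -> R, forall k, P (c k) & v = \sum_k c k * s`_k.

Lemma ideal_span0 s : ideal_span s 0.
Proof.
by exists (fun _ => 0) => [k|]; [exact: subring0 | rewrite big1 // => k _; rewrite mul0r].
Qed.

Lemma ideal_spanD s u v : ideal_span s u -> ideal_span s v -> ideal_span s (u + v).
Proof.
move=> [c Pc ->] [d Pd ->]; exists (fun k => c k + d k) => [k|].
  exact: subgroupD subring0 PB _ _ (Pc k) (Pd k).
by rewrite -big_split; apply: eq_bigr => k _; rewrite mulrDl.
Qed.

Lemma ideal_spanM s r v : P r -> ideal_span s v -> ideal_span s (r * v).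
Proof.
move=> Pr [c Pc ->]; exists (fun k => r * c k) => [k|]; first exact: PM.
by rewrite mulr_sumr; apply: eq_bigr => k _; rewrite mulrA.
Qed.

Lemma mem_ideal_span s v : v \in s -> ideal_span s v.
Proof.
move=> sv; have lt_vs : (index v s < size s)%N by rewrite index_mem.
exists (fun k => if k == Ordinal lt_vs then 1 else 0) => [k|].
  by case: ifP => _; [exact: P1 | exact: subring0].
rewrite (bigD1 (Ordinal lt_vs)) //= eqxx mul1r nth_index // big1 ?addr0 // => k.
by move/negPf ->; rewrite mul0r.
Qed.

Lemma ideal_span_sub s t v : {subset s <= t} -> ideal_span s v -> ideal_span t v.
Proof.
move=> st [c Pc ->]; apply: big_ind => [|u w|k _]; [exact: ideal_span0 | exact: ideal_spanD |].
by apply: ideal_spanM => //; apply/mem_ideal_span/st/mem_nth.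
Qed.

Local Notation Kg := (Kgrade (@regular_act R) P).

Lemma Kgrade_cat_le s t : (forall v, v \in s -> P v) -> ele (Kg (nthf t)) (Kg (nthf (s ++ t))).
Proof.
elim: s => [|a s IH] Ps; first exact: ele_refl.
apply: (ele_trans (IH _)) => [v sv|]; first by apply: Ps; rewrite inE sv orbT.
have -> : nthf (s ++ t) = fun i => nthf (a :: s ++ t) (lift ord0 i).
  by apply/funext => i; rewrite /nthf lift0.
apply: (Kgrade_lift0_le (@regular_actD R) (@regular_act_comm R) subring0 PB
         (x := nthf (a :: s ++ t))) => v Pv.
by apply: PM => //; apply: Ps; rewrite mem_head.
Qed.

Lemma Kgrade_cat_span_le s t : (forall v, v \in t -> ideal_span s v) ->
  ele (Kg (nthf (s ++ t))) (Kg (nthf s)).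
Proof.
elim/last_ind: t => [|t w IH] span_t; first by rewrite cats0; exact: ele_refl.
have IHt : ele (Kg (nthf (s ++ t))) (Kg (nthf s)).
  by apply: IH => v tv; apply: span_t; rewrite mem_rcons inE tv orbT.
apply: (ele_trans _ IHt).
have [c Pc ew] : ideal_span (s ++ t) w.
  apply: ideal_span_sub (span_t _ _) => [v|]; first by rewrite mem_cat => ->.
  by rewrite mem_rcons mem_head.
set u := s ++ t; pose x (i : 'I_(size u).+1) := (rcons u w)`_i.
rewrite -rcons_cat -/u -(Kgrade_cast _ _ (e := size_rcons u w) (x' := x)) //.
have nth_lift_max (k : 'I_(size u)) : x (lift ord_max k) = u`_k.
  by rewrite /x /= /bump leqNgt ltn_ord /= nth_rcons ltn_ord.
have -> : nthf u = fun i => x (lift ord_max i) by apply/funext => i; rewrite nth_lift_max.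
apply: (Kgrade_le_lift_max (@regular_actD R) (@regular_act_comm R) subring0 PB (c := c)).
  by move=> k v Pv; apply: PM.
move=> v; rewrite /regular_act; under eq_bigr do rewrite nth_lift_max.
by rewrite /x nth_rcons ltnn eqxx ew mulr_suml; apply: eq_bigr => k _; rewrite mulrA.
Qed.

Lemma Kgrade_ideal_span_le l (y : 'I_l -> R) s : (forall v, v \in s -> P v) ->
  (forall i, ideal_span s (y i)) -> ele (Kg y) (Kg (nthf s)).
Proof.
move=> Ps span_y; pose t := [seq y i | i <- enum 'I_l].
have e : l = size t by rewrite size_map size_enum_ord.
rewrite -(Kgrade_cast _ _ (e := e) (x' := nthf t)) => [|i]; last first.
  by rewrite /nthf /t (nth_map i) -[nat_of_ord (cast_ord e i)]/(nat_of_ord i) ?nth_ord_enum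
    ?size_enum_ord ?ltn_ord.
apply: ele_trans (Kgrade_cat_le t Ps) (Kgrade_cat_span_le _) => v /mapP[i _ ->].
exact: span_y.
Qed.

End SubringKoszul.

Section Ideals.
Variables (R : comPzRingType) (I : R -> Prop).
Hypothesis idI : is_ideal I.

Lemma ideal0 : I 0.
Proof. by case: idI. Qed.

Lemma idealD u v : I u -> I v -> I (u + v).
Proof. by case: idI => _ + _; apply. Qed.

Lemma idealM r u : I u -> I (r * u).
Proof. by case: idI => _ _; apply. Qed.

Lemma idealB u v : I u -> I v -> I (u - v).
Proof. by move=> Iu Iv; apply: idealD => //; rewrite -mulN1r; apply: idealM. Qed.

End Ideals.

Section Amalgamation.
Variables (A B : comPzRingType) (f : {rmorphism A -> B}) (J : B -> Prop).
Hypothesis idJ : is_ideal J.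
Local Notation amal := (amalg f J).

Lemma amalg1 : amal 1.
Proof. by rewrite /amalg /= rmorph1 subrr; apply: ideal0. Qed.

Lemma amalgB u v : amal u -> amal v -> amal (u - v).
Proof.
rewrite /amalg /= rmorphB => Ju Jv.
have -> : u.2 - v.2 - (f u.1 - f v.1) = (u.2 - f u.1) - (v.2 - f v.1) by ring.
exact: idealB.
Qed.

Lemma amalgM u v : amal u -> amal v -> amal (u * v).
Proof.
rewrite /amalg /= rmorphM => Ju Jv.
have -> : u.2 * v.2 - f u.1 * f v.1 = u.2 * (v.2 - f v.1) + f v.1 * (u.2 - f u.1) by ring.
by apply: idealD => //; apply: idealM.
Qed.

Lemma amalg_iota a : amal (iotaA f a).
Proof. by rewrite /amalg /= subrr; apply: ideal0. Qed.

Definition amalg_J (v : A * B) : B := v.2 - f v.1.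

(* As an [A]-module, [A \bowtie^f J] is [A \oplus J] via [(a, f a + j) <-> (a, j)]. *)
Lemma Kgrade_amalg l (x : 'I_l -> A) :
  Kgrade (@regular_act _) amal (fun i => iotaA f (x i))
  = emin (Kgrade (@regular_act A) (@fullset_pred A) x) (Kgrade (via_act f) J x).
Proof.
apply: (@Kgrade_direct_sum _ A A _ A B (@regular_act _) (@regular_act A) (via_act f) amal
         (@fullset_pred A) J l (fun i => iotaA f (x i)) x x fst amalg_J
         (fun a b => (a, f a + b))).
all: try by [].
- exact: regular_actD.
- by move=> r u v; rewrite /via_act mulrDr.
- by move=> u v; rewrite /amalg_J /= rmorphD opprD addrACA.
- by move=> j v; rewrite /amalg_J /via_act /= rmorphM mulrBr.
- by move=> a b; rewrite /amalg_J /= addrC addKr.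
- by case=> a b; rewrite /amalg_J /= addrC subrK.
- by move=> v; split=> [Jv | [_ Jv]].
- exact: ideal0 idJ.
Qed.

Lemma ext_ideal_span (a : A -> Prop) (Y : seq (A * B)) :
  (forall v, v \in Y -> ext_ideal f J a v) ->
  exists2 U : seq A, (forall u, u \in U -> a u) &
    forall v, v \in Y -> ideal_span amal (map (iotaA f) U) v.
Proof.
elim: Y => [|w Y IH] aY; first by exists [::].
have [U Ua spanY] : exists2 U : seq A, (forall u, u \in U -> a u) &
    forall v, v \in Y -> ideal_span amal (map (iotaA f) U) v.
  by apply: IH => v vY; apply: aY; rewrite inE vY orbT.
have [n [u [r [ua ramal ->]]]] := aY w (mem_head _ _).
pose U' := [seq u k | k <- enum 'I_n] ++ U.
exists U' => [v | v]; first by rewrite mem_cat => /orP[/mapP[k _ ->] | /Ua].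
rewrite inE => /orP[/eqP -> | vY]; last first.
  apply: (ideal_span_sub amalg1 amalgB amalgM _ (spanY v vY)) => z zU.
  by rewrite map_cat mem_cat zU orbT.
(* The sum in [ext_ideal] lives in a convertible but different instance on [A * B],
   hence the conversion-checked [exact]. *)
apply: big_ind => [| u1 u2 | k _].
- exact (ideal_span0 amalg1 amalgB _).
- exact (@ideal_spanD _ _ amalg1 amalgB _ _ _).
rewrite mulrC; apply: (ideal_spanM amalgM (ramal k)).
apply: (mem_ideal_span amalg1 amalgB); rewrite map_cat mem_cat; apply/orP; left.
by do 2!apply: map_f; rewrite mem_enum.
Qed.

Lemma KgradeI_ext_ideal_le (a : A -> Prop) :
  ele (KgradeI (@regular_act _) amal (ext_ideal f J a))
      (emin (KgradeI (@regular_act A) (@fullset_pred A) a) (KgradeI (via_act f) J a)).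
Proof.
apply: esup_ele => _ [l [y [ya ->]]].
have [U Ua span_y] : exists2 U : seq A, (forall u, u \in U -> a u) &
    forall i, ideal_span amal (map (iotaA f) U) (y i).
  have aY v : v \in [seq y i | i <- enum 'I_l] -> ext_ideal f J a v by case/mapP=> i _ ->.
  have [U Ua spanY] := ext_ideal_span aY.
  by exists U => // i; apply: spanY; rewrite map_f ?mem_enum.
apply: ele_trans (Kgrade_ideal_span_le amalg1 amalgB amalgM _ span_y) _ => [v|].
  by case/mapP=> u _ ->; apply: amalg_iota.
have e : size U = size (map (iotaA f) U) by rewrite size_map.
rewrite (Kgrade_cast _ _ (e := e) (x := fun i => iotaA f (nthf U i))) => [|i]; last first.
  by rewrite /nthf -[nat_of_ord (cast_ord e i)]/(nat_of_ord i) (nth_map 0) ?ltn_ord.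
rewrite Kgrade_amalg; apply: emin_ele2; apply: ele_esup;
  by exists (size U), (nthf U); split=> // i; apply/Ua/mem_nth.
Qed.

End Amalgamation.

Theorem lemma3p1 (A B : comPzRingType) (f : {rmorphism A -> B}) (J : B -> Prop)
  (hJ : is_ideal J) :
  (forall (l : nat) (x : 'I_l -> A),
     Kgrade (@regular_act _) (amalg f J) (fun i => iotaA f (x i))
     = emin (Kgrade (@regular_act A) (@fullset_pred A) x) (Kgrade (via_act f) J x))
  /\
  (forall a : A -> Prop, is_ideal a ->
     ele (KgradeI (@regular_act _) (amalg f J) (ext_ideal f J a))
         (emin (KgradeI (@regular_act A) (@fullset_pred A) a) (KgradeI (via_act f) J a))).
Proof.
split=> [l x | a _]; first exact: Kgrade_amalg.
exact: KgradeI_ext_ideal_le.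
Qed.
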